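(* Let $N \ge 1$ and let $W_N$ be the set of binary words of length $N$. Define $\varphi_2 : W_N \to W_N$ by $\varphi_2(u) = 1^{p+1} v 11 v'$ if $u = 1^p v 111 v'$ where $p \geq 0$, $v'$ is a (possibly empty) word, and $v$ is a nonempty word whose first and last letters are $0$ and which does not contain $111$ as a contiguous subword; and $\varphi_2(u) = u$ otherwise. Then $|P(\varphi_2(u))| = |P(u)|$ for every $u \in W_N$.
   Context: For a binary word $x$, $x^j$ denotes $j$ concatenated copies of $x$, and juxtaposition denotes concatenation. For a binary word $w = w_1 \cdots w_\ell$ of length $\ell$, $P(w)$ is the set of indices $i \geq 2$ such that at least one of the following holds: (i) $\ell \geq i$ and $w_{i-1} w_i = 00$; (ii) $\ell \geq i+2$ and $w_{i-1} w_i w_{i+1} w_{i+2} = 0100$; (iii) $\ell \geq i+3$ and $w_{i-1} \cdots w_{i+3} = 01010$. *)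

(* Binary words are [seq bool], letter 0 = false, letter 1 = true. *)
From mathcomp Require Import all_boot.
Set Implicit Arguments. Unset Strict Implicit. Unset Printing Implicit Defensive.

(* 1-based letter access: w_j = letter w j  (only used for 1 <= j <= size w) *)
Definition letter (w : seq bool) (j : nat) : bool := nth true w j.-1.

Definition Pcond (w : seq bool) (i : nat) : bool :=
  let l := size w in
  (2 <= i) &&
  [|| [&& i <= l, letter w i.-1 == false & letter w i == false]
    , [&& i + 2 <= l, letter w i.-1 == false, letter w i == true,
          letter w i.+1 == false & letter w i.+2 == false]
    | [&& i + 3 <= l, letter w i.-1 == false, letter w i == true,
          letter w i.+1 == false, letter w i.+2 == true & letter w i.+3 == false] ].

(* P(w) as a list of indices: every element of P(w) lies in [2, size w],
   so it suffices to scan iota 2 (size w) = [2, ..., size w + 1]. *)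
Definition Pset (w : seq bool) : seq nat := [seq i <- iota 2 (size w) | Pcond w i].
Definition Pcard (w : seq bool) : nat := size (Pset w).

Definition decomp_ok (u : seq bool) (p k : nat) : bool :=
  let v := take k (drop p u) in
  let rest := drop (p + k) u in
  [&& p + k + 3 <= size u, take p u == nseq p true, 0 < k,
      head true v == false, last true v == false,
      ~~ infix [:: true; true; true] v
    & take 3 rest == [:: true; true; true]].

(* phi_2: if some decomposition u = 1^p v 111 v' exists, return 1^(p+1) v 11 v'
   (the first one found; the decomposition is in fact unique), else u. *)
Definition phi2 (u : seq bool) : seq bool :=
  let cands := [seq (p, k) | p <- iota 0 (size u).+1, k <- iota 1 (size u)] in
  match [seq pk <- cands | decomp_ok u pk.1 pk.2] with
  | (p, k) :: _ => nseq p.+1 true ++ take k (drop p u) ++ [:: true; true]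
                    ++ drop (p + k + 3) u
  | [::] => u
  end.

(* Index i lies in P(w) exactly when one of the words 00, 0100, 01010 occurs
   in w starting at position i - 1, so |P(w)| counts the suffixes of w that
   begin with one of these patterns.  None of the patterns begins with 1 or
   contains the factor 11, so no occurrence can tell a block 111 from a block
   11, nor notice a leading 1: the count is the same for 1^p v 111 v' and
   1^(p+1) v 11 v'. *)
From mathcomp Require Import all_boot.

Definition Pstart (s : seq bool) : bool :=
  match s with
  | false :: false :: _ => true
  | false :: true :: false :: false :: _ => true
  | false :: true :: false :: true :: false :: _ => true
  | _ => false
  end.

Fixpoint Pstarts (w : seq bool) : nat :=
  if w is _ :: s then Pstart w + Pstarts s else 0.

Lemma Pcond_cons x w i : 2 <= i -> Pcond (x :: w) i.+1 = Pcond w i.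
Proof. by case: i => [|[|i]]. Qed.

Lemma Pcond_cons_2 x w : Pcond (x :: w) 2 = Pstart (x :: w).
Proof.
by case: x; case: w => [|a [|b [|c [|d w]]]]; rewrite /Pcond /letter /=;
  do ?case: a; do ?case: b; do ?case: c; do ?case: d.
Qed.

Lemma Pcard_Pstarts w : Pcard w = Pstarts w.
Proof.
rewrite /Pcard /Pset size_filter; elim: w => [|x w IH] //=.
rewrite Pcond_cons_2 -IH -[3]/(1 + 2) iotaDl count_map; congr (_ + _).
apply: eq_in_count => i; rewrite mem_iota => /andP[i_ge2 _] /=.
by rewrite add1n Pcond_cons.
Qed.

Lemma Pstarts_cat11_cat111 x y :
  Pstarts (x ++ [:: true; true] ++ y) = Pstarts (x ++ [:: true; true; true] ++ y).
Proof.
elim: x => [|a x IH] //=; rewrite IH; congr (_ + _).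
by case: a; case: x {IH} => [|b [|c [|d [|e x]]]] //=;
  do ?case: b; do ?case: c; do ?case: d; do ?case: e.
Qed.

Lemma decomp_okE u p k : decomp_ok u p k ->
  u = nseq p true ++ take k (drop p u) ++ [:: true; true; true] ++ drop (p + k + 3) u.
Proof.
case/and5P=> _ /eqP take_p _ _ /and3P[_ _ /eqP take_3].
rewrite -take_p -take_3 [p + k + 3]addnC -(drop_drop _ 3) cat_take_drop.
by rewrite [p + k]addnC -drop_drop !cat_take_drop.
Qed.

Lemma phi2P u : phi2 u = u \/
  exists p v w, u = nseq p true ++ v ++ [:: true; true; true] ++ w /\
                phi2 u = nseq p.+1 true ++ v ++ [:: true; true] ++ w.
Proof.
rewrite /phi2; set cands := [seq _ | _ <- _, _ <- _].
case E: [seq pk <- cands | decomp_ok u pk.1 pk.2] => [|[p k] s]; [by left | right].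
have : (p, k) \in [seq pk <- cands | decomp_ok u pk.1 pk.2] by rewrite E mem_head.
rewrite mem_filter => /andP[/decomp_okE u_eq _].
by exists p, (take k (drop p u)), (drop (p + k + 3) u).
Qed.

Theorem lemma4p2 (N : nat) (hN : 1 <= N) (u : seq bool) (hu : size u = N) :
  Pcard (phi2 u) = Pcard u.
Proof.
case: (phi2P u) => [-> // | [p [v [w [u_eq ->]]]]].
by rewrite u_eq !Pcard_Pstarts (catA (nseq p true)) -Pstarts_cat11_cat111 -catA.
Qed.
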